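(* For every integer $n \geq 5$, the Roman domination number of the generalized Petersen graph $P(n,2)$ is $$\gamma_R(P(n,2)) = \left\lceil \frac{8n}{7} \right\rceil .$$
   Context: For integers $n \ge 3$ and $1 \le k < n/2$, the generalized Petersen graph $P(n,k)$ has vertex set $\{v_i, u_i : 0 \le i \le n-1\}$ and edge set $\{v_iv_{i+1},\ v_iu_i,\ u_iu_{i+k} : 0 \le i \le n-1\}$, with subscripts taken modulo $n$. A Roman domination function (RDF) of a graph $G$ is a function $f: V(G)\to\{0,1,2\}$ such that every vertex $u$ with $f(u)=0$ is adjacent to at least one vertex $v$ with $f(v)=2$. Its weight is $\sum_{u\in V(G)} f(u)$. The Roman domination number $\gamma_R(G)$ is the minimum weight of an RDF of $G$. *)

From mathcomp Require Import all_boot.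
Set Implicit Arguments. Unset Strict Implicit. Unset Printing Implicit Defensive.

(* Vertices of the generalized Petersen graph P(n,k):
   (false, i) stands for v_i and (true, i) stands for u_i, i in {0..n-1}. *)
Definition gp_vertex (n : nat) : finType := (bool * 'I_n)%type.

Definition gp_adj (n k : nat) (x y : gp_vertex n) : bool :=
  match x, y with
  | (false, i), (false, j) => ((i + 1) %% n == j) || ((j + 1) %% n == i)
  | (true, i), (true, j) => ((i + k) %% n == j) || ((j + k) %% n == i)
  | (false, i), (true, j) => i == j
  | (true, i), (false, j) => i == j
  end.

Definition is_rdf (V : finType) (e : rel V) (f : {ffun V -> 'I_3}) : bool :=
  [forall u, (val (f u) == 0) ==> [exists v, e u v && (val (f v) == 2)]].

Definition rdf_weight (V : finType) (f : {ffun V -> 'I_3}) : nat :=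
  \sum_(u : V) val (f u).

(* Roman domination number: minimum weight of an RDF.  The constant-2
   function is always an RDF of weight 2*|V|, so this is the true minimum. *)
Definition roman_domination_number (V : finType) (e : rel V) : nat :=
  \big[minn/(2 * #|V|)]_(f : {ffun V -> 'I_3} | is_rdf e f) rdf_weight f.

Definition gammaR_GP (n k : nat) : nat :=
  @roman_domination_number (gp_vertex n) (@gp_adj n k).

(* A function f : V -> {0,1,2} on P(n,2) is read as the cyclic sequence of
   columns c_i = (f v_i, f u_i).  Since v_i is adjacent to v_(i-1), v_(i+1),
   u_i and u_i to u_(i-2), u_(i+2), v_i, the Roman condition at v_i and u_i
   only involves the five columns c_(i-2), ..., c_(i+2).

   Lower bound: a potential phi on four consecutive columns satisfies
   8 + phi(c_j..c_(j+3)) <= 7 w(c_(j+4)) + phi(c_(j+1)..c_(j+4)) on every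
   admissible window; summing around the cycle cancels phi and gives
   8n <= 7 w(f).

   Upper bound: the block (0,0)(1,0)(0,2)(0,2)(1,0)(0,0)(2,0) has weight 8 and
   two admissible cyclic patterns that agree on their first four columns can
   be concatenated, so copies of the block followed by one of seven short
   seeds of length 6..12 realise ceil(8n/7) for all n >= 6; n = 5 has its own
   pattern. *)

From mathcomp Require Import all_boot all_order zmodp zify.
Import Order.TTheory.
Set Implicit Arguments. Unset Strict Implicit. Unset Printing Implicit Defensive.

Notation column := (nat * nat)%type.

Definition colw (c : column) : nat := c.1 + c.2.

Definition dominated_window (c0 c1 c2 c3 c4 : column) : bool :=
  [&& (c2.1 == 0) ==> [|| c1.1 == 2, c3.1 == 2 | c2.2 == 2]
    & (c2.2 == 0) ==> [|| c0.2 == 2, c4.2 == 2 | c2.1 == 2]].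

Definition window_ok (c : nat -> column) (j : nat) : bool :=
  dominated_window (c j) (c j.+1) (c j.+2) (c j.+3) (c j.+4).

Lemma window_ok_shift (c c' : nat -> column) j j' :
  (forall o, o < 5 -> c (j + o) = c' (j' + o)) -> window_ok c j = window_ok c' j'.
Proof. by move=> cc'; rewrite /window_ok -(addn0 j) -(addn0 j') -!addnS !cc'. Qed.

Lemma exists_adj_has (T : finType) (adj P : pred T) (s : seq T) :
  (forall v, adj v = (v \in s)) -> [exists v, adj v && P v] = has P s.
Proof.
move=> adjE; apply/existsP/hasP => [[v /andP [adjv Pv]] | [v sv Pv]]; exists v => //.
  by rewrite -adjE.
by rewrite adjE sv.
Qed.

Section GP2Columns.

Variable n : nat.
Implicit Type f : {ffun gp_vertex n.+1 -> 'I_3}.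

Lemma eq_inZp (i : 'I_n.+1) k : (i == inZp k) = (i == k %[mod n.+1]).
Proof. by rewrite -val_eqE /= modZp. Qed.

Lemma inZp_eq k m : k = m %[mod n.+1] -> inZp k = inZp m :> 'I_n.+1.
Proof. by move=> ekm; apply: val_inj. Qed.

Lemma gp_adj2_v k y :
  @gp_adj n.+1 2 (false, inZp k) y =
  (y \in [:: (false, inZp (k + n)); (false, inZp k.+1); (true, inZp k)]).
Proof.
case: y => [[] i]; rewrite !inE /= !xpair_eqE /= ?orbF; first by rewrite eq_sym.
rewrite !eq_inZp modnDml -(eqn_modDr 1 i (k + n)) -addnA [n + 1]addn1 modnDr.
by rewrite modZp addn1 orbC [k.+1 %% _ == _]eq_sym.
Qed.

Lemma gp_adj2_u k y :
  @gp_adj n.+1 2 (true, inZp k) y =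
  (y \in [:: (true, inZp (k + n.*2)); (true, inZp k.+2); (false, inZp k)]).
Proof.
case: y => [[] i]; rewrite !inE /= !xpair_eqE /= ?orbF; last by rewrite eq_sym.
rewrite !eq_inZp modnDml -(eqn_modDr 2 i (k + n.*2)).
have -> : k + n.*2 + 2 = 2 * n.+1 + k by lia.
by rewrite modnMDl modZp addn2 orbC [k.+2 %% _ == _]eq_sym.
Qed.

Definition gp_column f (k : nat) : column :=
  (val (f (false, inZp k)), val (f (true, inZp k))).

Definition roman_dominated f (u : gp_vertex n.+1) : bool :=
  (val (f u) == 0) ==> [exists v, @gp_adj n.+1 2 u v && (val (f v) == 2)].

Lemma window_okE f j :
  window_ok (gp_column f) j =
  roman_dominated f (false, inZp j.+2) && roman_dominated f (true, inZp j.+2).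
Proof.
rewrite /roman_dominated (exists_adj_has _ (gp_adj2_v _)).
rewrite (exists_adj_has _ (gp_adj2_u _)) /=.
have -> : inZp (j.+2 + n) = inZp j.+1 :> 'I_n.+1.
  by apply: inZp_eq; rewrite addSnnS modnDr.
have -> : inZp (j.+2 + n.*2) = inZp j :> 'I_n.+1.
  by apply: inZp_eq; rewrite (_ : _ + _ = 2 * n.+1 + j) ?modnMDl //; lia.
by rewrite !orbF.
Qed.

Lemma is_rdf_windowsP f :
  reflect (forall j, window_ok (gp_column f) j) (is_rdf (@gp_adj n.+1 2) f).
Proof.
apply: (iffP forallP) => [rdf j | wok [b i]].
  by rewrite window_okE; apply/andP; split; apply: rdf.
have -> : i = inZp (i + n.*2).+2.
  by apply: val_inj; rewrite /= (_ : _.+2 = 2 * n.+1 + i) ?modnMDl ?modZp //; lia.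
by move: (wok (i + n.*2)); rewrite window_okE; case: b => /andP [].
Qed.

Lemma gp_columnD f k : gp_column f (k + n.+1) = gp_column f k.
Proof. by rewrite /gp_column (@inZp_eq (k + n.+1) k) ?modnDr. Qed.

Lemma rdf_weight_columns f : rdf_weight f = \sum_(j < n.+1) colw (gp_column f j).
Proof.
rewrite /rdf_weight (eq_bigr (fun u => val (f (u.1, u.2)))); last by case.
rewrite -(pair_bigA _ (fun b j => val (f (b, j)))) big_bool /= -big_split.
by apply: eq_bigr => j _; rewrite /gp_column /colw valZpK addnC.
Qed.

End GP2Columns.

Definition columns : seq column := [seq (a, b) | a <- iota 0 3, b <- iota 0 3].

Lemma mem_columns (c : column) : (c \in columns) = (c.1 < 3) && (c.2 < 3).
Proof. by case: c => [[|[|[|a]]] [|[|[|b]]]]. Qed.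

Lemma gp_column_in n (f : {ffun gp_vertex n.+1 -> 'I_3}) k : gp_column f k \in columns.
Proof. by rewrite mem_columns !ltn_ord. Qed.

Definition table := seq (seq (seq (seq nat))).

Definition table_at (t : table) (c0 c1 c2 c3 : column) : nat :=
  let idx c := 3 * c.1 + c.2 in
  nth 0 (nth [::] (nth [::] (nth [::] t (idx c0)) (idx c1)) (idx c2)) (idx c3).

Definition discharging_ok (t : table) : bool :=
  all (fun c0 => all (fun c1 => all (fun c2 => all (fun c3 => all (fun c4 =>
    dominated_window c0 c1 c2 c3 c4 ==>
      (8 + table_at t c0 c1 c2 c3 <= 7 * colw c4 + table_at t c1 c2 c3 c4))
  columns) columns) columns) columns) columns.

(* The potential is the longest-path function of the graph on windows with
   arc gains 8 - 7 w(c4): [relax] is one round of Bellman-Ford, and 12 rounds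
   from 0 reach its fixed point, which is exactly [discharging_ok]. *)
Definition relax (t : table) : table :=
  [seq [seq [seq [seq
     foldr maxn 0 [seq table_at t c0 c1 c2 c3 + 8 - 7 * colw c4
                  | c0 <- columns & dominated_window c0 c1 c2 c3 c4]
   | c4 <- columns] | c3 <- columns] | c2 <- columns] | c1 <- columns].

Definition potential_table : table := iter 12 relax [::].

Definition potential : column -> column -> column -> column -> nat :=
  table_at potential_table.

Lemma discharging_potential : discharging_ok potential_table.
Proof. by vm_compute. Qed.

Lemma potential_step c0 c1 c2 c3 c4 :
  all (fun c => c \in columns) [:: c0; c1; c2; c3; c4] ->
  dominated_window c0 c1 c2 c3 c4 ->
  8 + potential c0 c1 c2 c3 <= 7 * colw c4 + potential c1 c2 c3 c4.
Proof.
rewrite /= !andbT => /and5P [c0P c1P c2P c3P c4P].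
move: discharging_potential => /allP /(_ c0 c0P) /allP /(_ c1 c1P).
by move=> /allP /(_ c2 c2P) /allP /(_ c3 c3P) /allP /(_ c4 c4P) /implyP.
Qed.

Lemma sum_shift_periodic (F : nat -> nat) N k :
  (forall j, F (j + N) = F j) -> \sum_(j < N) F (j + k) = \sum_(j < N) F j.
Proof.
move=> FN; elim: k => [|k IHk]; first by apply: eq_bigr => j _; rewrite addn0.
rewrite -{}IHk -!(big_mkord xpredT (fun j => F (j + _))).
under eq_bigr do rewrite addnS -addSn.
apply/eqP; rewrite -(eqn_add2l (F (0 + k))).
rewrite -(big_nat_recl _ _ (fun j => F (j + k))) // big_nat_recr //=.
by rewrite addnC add0n [N + k]addnC FN.
Qed.

Lemma potential_sum_le N a (w g : nat -> nat) :
  (forall j, g (j + N) = g j) -> (forall j, j < N -> a + g j <= w j + g j.+1) ->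
  N * a <= \sum_(j < N) w j.
Proof.
move=> gN step.
have : \sum_(j < N) (a + g j) <= \sum_(j < N) (w j + g j.+1).
  by apply: leq_sum => j _; apply: step.
under [X in _ <= X]eq_bigr do rewrite -addn1.
by rewrite !big_split /= (sum_shift_periodic 1 gN) sum_nat_const card_ord leq_add2r.
Qed.

Lemma rdf_weight_lb n (f : {ffun gp_vertex n.+1 -> 'I_3}) :
  is_rdf (@gp_adj n.+1 2) f -> 8 * n.+1 <= 7 * rdf_weight f.
Proof.
move=> /is_rdf_windowsP wok; set c := gp_column f.
have cN k : c (k + n.+1) = c k by apply: gp_columnD.
rewrite rdf_weight_columns big_distrr /=.
rewrite -(@sum_shift_periodic (fun j => 7 * colw (c j)) _ 4); last by move=> j; rewrite cN.
rewrite mulnC; apply: (potential_sum_le (w := fun j => 7 * colw (c (j + 4)))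
  (g := fun j => potential (c j) (c j.+1) (c j.+2) (c j.+3))).
  by move=> j; rewrite -!addSn !cN.
move=> j _; rewrite /= addn4; apply: potential_step; last exact: wok.
by rewrite /= !gp_column_in.
Qed.

Definition cyc (s : seq column) (k : nat) : column := nth (0, 0) s (k %% size s).

Definition rdf_pattern (s : seq column) : bool :=
  all (fun c => c \in columns) s && all (window_ok (cyc s)) (iota 0 (size s)).

Definition pattern_weight (s : seq column) : nat := sumn (map colw s).

Lemma rdf_patternP s : 0 < size s ->
  reflect (all (fun c => c \in columns) s /\ forall j, window_ok (cyc s) j)
          (rdf_pattern s).
Proof.
move=> s0; apply: (iffP andP) => [[sB /allP wok] | [sB wok]]; split=> //; last first.
  by apply/allP => j _; apply: wok.
move=> j; rewrite -(window_ok_shift (c := cyc s) (j := j %% size s)).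
  by rewrite wok // mem_iota ltn_pmod.
by move=> o _; rewrite /cyc modnDml.
Qed.

Lemma modn_subn k d : d <= k -> k < d + d -> k %% d = k - d.
Proof. by move=> dk kd; rewrite -{1}(subnK dk) modnDr modn_small // ltn_subLR. Qed.

Section Gluing.

Variables s t : seq column.
Hypotheses (s4 : 4 <= size s) (t4 : 4 <= size t) (st4 : take 4 s = take 4 t).

Lemma nth_prefix i : i < 4 -> nth (0, 0) s i = nth (0, 0) t i.
Proof. by move=> i4; rewrite -(nth_take _ i4) st4 nth_take. Qed.

Lemma cyc_catl j o : j < size s -> o < 5 -> cyc (s ++ t) (j + o) = cyc s (j + o).
Proof.
move=> js o5; rewrite /cyc size_cat (@modn_small (j + o)); last by lia.
rewrite nth_cat; case: ltnP => jos; first by rewrite modn_small.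
by rewrite modn_subn ?nth_prefix //; lia.
Qed.

Lemma cyc_catr j o : size s <= j < size s + size t -> o < 5 ->
  cyc (s ++ t) (j + o) = cyc t (j - size s + o).
Proof.
move=> /andP [sj jst] o5; rewrite /cyc size_cat nth_cat.
case: (ltnP (j + o) (size s + size t)) => jo.
  have jt : j - size s + o < size t by lia.
  have sjo : size s <= j + o by lia.
  by rewrite (modn_small jo) (modn_small jt) ltnNge sjo /=; congr nth; lia.
have jo' : j + o < (size s + size t) + (size s + size t) by lia.
have jt : size t <= j - size s + o by lia.
have jt' : j - size s + o < size t + size t by lia.
have wrap : j + o - (size s + size t) < 4 by lia.
rewrite (modn_subn jo jo') (modn_subn jt jt') ifT; last by lia.
by rewrite nth_prefix //; congr nth; lia.
Qed.

Lemma rdf_pattern_cat : rdf_pattern s -> rdf_pattern t -> rdf_pattern (s ++ t).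
Proof.
have s0 : 0 < size s by lia.
have t0 : 0 < size t by lia.
move=> /(rdf_patternP s0) [sB swok] /(rdf_patternP t0) [tB twok].
rewrite /rdf_pattern all_cat sB tB; apply/allP => j; rewrite mem_iota size_cat /=.
case: (ltnP j (size s)) => js jst.
  by rewrite (window_ok_shift (c' := cyc s) (j' := j)) // => o o5; apply: cyc_catl.
rewrite (window_ok_shift (c' := cyc t) (j' := j - size s)) // => o o5.
by apply: cyc_catr; lia.
Qed.

End Gluing.

Lemma rdf_pattern_repeat p s a :
  4 <= size p -> 4 <= size s -> take 4 p = take 4 s ->
  rdf_pattern p -> rdf_pattern s -> rdf_pattern (flatten (nseq a p) ++ s).
Proof.
move=> p4 s4 ps pP sP; elim: a => [//|a IHa].
have take4 : take 4 p = take 4 (flatten (nseq a p) ++ s).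
  by case: a {IHa} => [//|a]; rewrite /= -catA takel_cat.
rewrite /= -catA; apply: rdf_pattern_cat => //.
by rewrite size_cat; lia.
Qed.

Lemma pattern_weight_repeat p s a :
  pattern_weight (flatten (nseq a p) ++ s) = a * pattern_weight p + pattern_weight s.
Proof.
rewrite /pattern_weight map_cat sumn_cat; congr (_ + _).
by elim: a => [//|a IHa]; rewrite /= map_cat sumn_cat IHa mulSn.
Qed.

Lemma rdf_of_pattern n (s : seq column) : size s = n.+1 -> rdf_pattern s ->
  exists2 f : {ffun gp_vertex n.+1 -> 'I_3},
    is_rdf (@gp_adj n.+1 2) f & rdf_weight f = pattern_weight s.
Proof.
move=> sn; have s0 : 0 < size s by rewrite sn.
move=> /(rdf_patternP s0) [sB wok].
pose f : {ffun gp_vertex n.+1 -> 'I_3} :=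
  [ffun u : gp_vertex n.+1 => inord (let c := nth (0, 0) s u.2 in if u.1 then c.2 else c.1)].
have fc k : gp_column f k = cyc s k.
  have := allP sB (cyc s k) (mem_nth _ (ltn_pmod k s0)).
  rewrite mem_columns /cyc /gp_column !ffunE /= sn => /andP [c1 c2].
  by rewrite !inordK //; case: nth.
exists f.
  apply/is_rdf_windowsP => j.
  by rewrite (window_ok_shift (c' := cyc s) (j' := j)) // => o _; rewrite fc.
rewrite rdf_weight_columns /pattern_weight sumnE big_map (big_nth (0, 0)) sn big_mkord.
by apply: eq_bigr => j _; rewrite fc /cyc sn modn_small.
Qed.

Definition period7 : seq column := zip [:: 0; 1; 0; 0; 1; 0; 2] [:: 0; 0; 2; 2; 0; 0; 0].

Definition seeds : seq (seq column) := [::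
  zip [:: 0; 1; 0; 0; 0; 2] [:: 0; 0; 2; 2; 0; 0];
  zip [:: 0; 1; 0; 0; 1; 0; 2] [:: 0; 0; 2; 2; 0; 0; 0];
  zip [:: 0; 1; 0; 0; 0; 2; 0; 2] [:: 0; 0; 2; 2; 0; 0; 1; 0];
  zip [:: 0; 1; 0; 0; 0; 2; 0; 0; 2] [:: 0; 0; 2; 2; 0; 0; 1; 1; 0];
  zip [:: 0; 1; 0; 0; 1; 0; 2; 0; 0; 2] [:: 0; 0; 2; 2; 0; 0; 0; 1; 1; 0];
  zip [:: 0; 1; 0; 0; 0; 2; 0; 0; 0; 0; 2] [:: 0; 0; 2; 2; 0; 0; 0; 2; 2; 0; 0];
  zip [:: 0; 1; 0; 0; 0; 2; 0; 0; 0; 1; 0; 2] [:: 0; 0; 2; 2; 0; 0; 0; 2; 2; 0; 0; 0]].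

Definition pattern5 : seq column := zip [:: 0; 0; 2; 0; 2] [:: 0; 0; 0; 2; 0].

Definition gp2_pattern (n : nat) : seq column :=
  if n == 5 then pattern5
  else flatten (nseq ((n - 6) %/ 7) period7) ++ nth [::] seeds ((n - 6) %% 7).

Lemma seeds_ok : all (fun r => let s := nth [::] seeds r in
    [&& size s == r + 6, take 4 period7 == take 4 s, rdf_pattern s
      & pattern_weight s == (8 * (r + 6) + 6) %/ 7]) (iota 0 7).
Proof. by vm_compute. Qed.

Lemma gp2_patternP n : 5 <= n ->
  [/\ size (gp2_pattern n) = n, rdf_pattern (gp2_pattern n)
    & pattern_weight (gp2_pattern n) = (8 * n + 6) %/ 7].
Proof.
rewrite /gp2_pattern; case: eqP => [-> _ | n5 n_ge5]; first by split; vm_compute.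
set a := (n - 6) %/ 7; set r := (n - 6) %% 7; set s := nth [::] seeds r.
have /allP/(_ r) := seeds_ok; rewrite mem_iota ltn_pmod // => /(_ isT).
case/and4P => /eqP size_s /eqP take_s sP /eqP weight_s.
have nE : n = a * 7 + (r + 6) by move: (divn_eq (n - 6) 7); lia.
have s4 : 4 <= size s by rewrite size_s; lia.
have period7P : rdf_pattern period7 by vm_compute.
split.
- by rewrite size_cat size_flatten /shape map_nseq sumn_nseq size_s mulnC -nE.
- exact: rdf_pattern_repeat.
- rewrite pattern_weight_repeat (_ : pattern_weight period7 = 8) // weight_s nE.
  have -> : 8 * (a * 7 + (r + 6)) + 6 = a * 8 * 7 + (8 * (r + 6) + 6) by lia.
  by rewrite divnMDl.
Qed.

Lemma ceil_div7_le m w : 8 * m <= 7 * w -> (8 * m + 6) %/ 7 <= w.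
Proof. by move=> le_mw; rewrite -ltnS ltn_divLR //; lia. Qed.

Theorem theorem2p12 (n : nat) (hn : 5 <= n) :
  gammaR_GP n 2 = (8 * n + 6) %/ 7.
Proof.
have [size_s sP weight_s] := gp2_patternP hn.
case: n hn size_s sP weight_s => [//|n] _ size_s sP weight_s.
have [f rdf_f weight_f] := rdf_of_pattern size_s sP.
rewrite /gammaR_GP /roman_domination_number -minEnat.
apply/eqP; rewrite eqn_leq -!leEnat; apply/andP; split.
  by rewrite -weight_s -weight_f; apply: bigmin_le_cond.
apply/bigmin_geP; split=> [|g /rdf_weight_lb lb]; rewrite leEnat ceil_div7_le //.
by rewrite card_prod card_bool card_ord; lia.
Qed.
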